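(* Let $n,N\ge 1$, let $A_0,\dots,A_N\in\mathbb{C}^{n\times n}$, $u_0\in\mathbb{C}^n$, and let $c_0(t),c_1(t),\dots$ be the Taylor coefficients in $\varepsilon$ of $u(t,\varepsilon)=\exp(tA(\varepsilon))u_0$. Then for every integer $m\ge 1$ and every $t\in\mathbb{R}$, $$\mathrm{vec}(c_0(t),\dots,c_{m-1}(t))=\exp(tL_m)\,\widetilde u_0,\qquad \widetilde u_0:=\begin{bmatrix}u_0\\0\\\vdots\\0\end{bmatrix}\in\mathbb{C}^{mn}.$$ Equivalently, the vector $\mathrm{vec}(c_0(t),\dots,c_{m-1}(t))$ solves the linear ODE $\frac{d}{dt}v=L_mv$, $v(0)=\widetilde u_0$.
   Context: $A(\varepsilon):=A_0+\varepsilon A_1+\cdots+\varepsilon^NA_N$. Since $\varepsilon\mapsto\exp(tA(\varepsilon))u_0$ is entire, write $u(t,\varepsilon)=\exp(tA(\varepsilon))u_0=\sum_{\ell=0}^\infty\varepsilon^\ell c_\ell(t)$ with $c_\ell(t)\in\mathbb{C}^n$. For vectors $x_1,\dots,x_k\in\mathbb{C}^n$, $\mathrm{vec}(x_1,\dots,x_k)$ denotes the stacked vector $[x_1^T,\dots,x_k^T]^T\in\mathbb{C}^{nk}$. For $m\ge1$, $L_m\in\mathbb{C}^{mn\times mn}$ is the lower block-triangular block-Toeplitz matrix with $n\times n$ blocks whose $(r,s)$ block ($1\le r,s\le m$) equals $A_{r-s}$ if $0\le r-s\le \min(m-1,N)$ and $0$ otherwise; equivalently $L_m=\sum_{i=0}^{\min(m-1,N)}S_m^i\otimes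 A_i$ with $S_m=\sum_{\ell=1}^{m-1}e_{\ell+1}e_\ell^T\in\mathbb{R}^{m\times m}$. *)

From Stdlib Require Import Reals ClassicalEpsilon Arith.
Open Scope R_scope.

Record Cx := mkC { Re : R; Im : R }.
Definition C0 : Cx := mkC 0 0.
Definition C1 : Cx := mkC 1 0.
Definition RtoC (r : R) : Cx := mkC r 0.
Definition Cadd (a b : Cx) : Cx := mkC (Re a + Re b) (Im a + Im b).
Definition Cmul (a b : Cx) : Cx :=
  mkC (Re a * Re b - Im a * Im b) (Re a * Im b + Im a * Re b).
Fixpoint Cpow (z : Cx) (k : nat) : Cx :=
  match k with O => C1 | S k => Cmul (Cpow z k) z end.
Fixpoint Csum (f : nat -> Cx) (K : nat) : Cx :=
  match K with O => C0 | S K => Cadd (Csum f K) (f K) end.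

Definition Ccv (u : nat -> Cx) (l : Cx) : Prop :=
  Un_cv (fun k => Re (u k)) (Re l) /\ Un_cv (fun k => Im (u k)) (Im l).

(* d x d matrices / vectors of length d: only indices < d are meaningful *)
Definition mat := nat -> nat -> Cx.
Definition vec := nat -> Cx.

Definition mmul (d : nat) (A B : mat) : mat :=
  fun i j => Csum (fun k => Cmul (A i k) (B k j)) d.
Definition mid : mat := fun i j => if Nat.eqb i j then C1 else C0.
Fixpoint mpow (d : nat) (A : mat) (k : nat) : mat :=
  match k with O => mid | S k => mmul d (mpow d A k) A end.
Definition mscale (z : Cx) (A : mat) : mat := fun i j => Cmul z (A i j).
Definition mvmul (d : nat) (M : mat) (v : vec) : vec :=
  fun i => Csum (fun k => Cmul (M i k) (v k)) d.

Definition exp_partial (d : nat) (M : mat) (K : nat) : mat :=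
  fun i j => Csum (fun k => Cmul (RtoC (/ INR (fact k))) (mpow d M k i j)) K.
Definition is_mexp (d : nat) (M E : mat) : Prop :=
  forall i j, (i < d)%nat -> (j < d)%nat -> Ccv (fun K => exp_partial d M K i j) (E i j).
Definition mexp (d : nat) (M : mat) : mat :=
  epsilon (inhabits (fun _ _ => C0)) (is_mexp d M).

Definition Apoly (N : nat) (As : nat -> mat) (eps : Cx) : mat :=
  fun r s => Csum (fun i => Cmul (Cpow eps i) (As i r s)) (S N).

(* L_m as an (m n) x (m n) matrix (blocks indexed from 0): the entry at
   global position (p, q) lies in block (p / n, q / n) at local position
   (p mod n, q mod n); the block (r, s) is A_{r-s} if 0 <= r-s <= N, else 0
   (r - s <= m-1 holds automatically for p, q < m n). *)
Definition Lmat (n N : nat) (As : nat -> mat) : mat :=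
  fun p q =>
    let r := (p / n)%nat in let s := (q / n)%nat in
    if andb (Nat.leb s r) (Nat.leb (r - s) N)
    then As (r - s)%nat (p mod n)%nat (q mod n)%nat else C0.

(* vec(c_0, ..., c_{m-1}) : entry p < m n is (c_{p / n})_{p mod n} *)
Definition stackv (n : nat) (c : nat -> vec) : vec :=
  fun p => c (p / n)%nat (p mod n)%nat.

Definition u0tilde (n : nat) (u0 : vec) : vec :=
  fun p => if Nat.ltb p n then u0 p else C0.

(* For real x, exp(t A(x)) u0 has two expansions in powers of x: the given series
   Σ_l x^l c_l(t), and the one obtained by expanding each power (t A(x))^k u0 in x.
   Since L_m is the block-Toeplitz matrix of multiplication by A(ε) modulo ε^m, the
   coefficient of x^l in (t A(x))^k u0 is the block l of (t L_m)^k ũ0 for every l < m.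
   Summing over k gives exp(t A(x)) u0 = Σ_{l<m} x^l (exp(t L_m) ũ0)_l + O(x^m) on [0, 1],
   the remainder being dominated by the same expansion for the entrywise moduli
   |A_j|, |t|, |u0|.  Uniqueness of the coefficients of a power series concludes. *)
From Stdlib Require Import Reals ClassicalEpsilon Arith Lra Lia Psatz Ring.
Open Scope R_scope.

Definition Copp (a : Cx) : Cx := mkC (- Re a) (- Im a).
Definition Csub (a b : Cx) : Cx := Cadd a (Copp b).

Lemma Cx_ext (a b : Cx) : Re a = Re b -> Im a = Im b -> a = b.
Proof. destruct a, b; simpl; intros -> ->; reflexivity. Qed.

Lemma Cx_ring_theory : ring_theory C0 C1 Cadd Cmul Csub Copp (@eq Cx).
Proof. constructor; intros; apply Cx_ext; simpl; ring. Qed.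
Add Ring Cx_ring : Cx_ring_theory.

Lemma Csub_eq0 (a b : Cx) : Csub a b = C0 -> a = b.
Proof.
  intros H. apply (f_equal (fun z => Cadd z b)) in H.
  replace (Cadd (Csub a b) b) with a in H by ring. rewrite H. ring.
Qed.

Lemma Cpow_RtoC (x : R) (l : nat) : Cpow (RtoC x) l = RtoC (x ^ l).
Proof. induction l; simpl; [reflexivity|]. rewrite IHl. apply Cx_ext; simpl; ring. Qed.

Lemma Cpow_add (z : Cx) (a b : nat) : Cpow z (a + b) = Cmul (Cpow z a) (Cpow z b).
Proof.
  induction b; simpl.
  - rewrite Nat.add_0_r. apply Cx_ext; simpl; ring.
  - rewrite Nat.add_succ_r; simpl. rewrite IHb. ring.
Qed.

Lemma Re_RtoC_mul (x : R) (z : Cx) : Re (Cmul (RtoC x) z) = x * Re z.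
Proof. simpl; ring. Qed.

Lemma Im_RtoC_mul (x : R) (z : Cx) : Im (Cmul (RtoC x) z) = x * Im z.
Proof. simpl; ring. Qed.

(** Used in place of the modulus, which would bring in square roots. *)
Definition Cnorm (z : Cx) : R := Rabs (Re z) + Rabs (Im z).

Lemma Cnorm_ge0 (z : Cx) : 0 <= Cnorm z.
Proof. unfold Cnorm. pose proof (Rabs_pos (Re z)); pose proof (Rabs_pos (Im z)); lra. Qed.

Lemma Cnorm_add (a b : Cx) : Cnorm (Cadd a b) <= Cnorm a + Cnorm b.
Proof.
  unfold Cnorm; simpl.
  pose proof (Rabs_triang (Re a) (Re b)); pose proof (Rabs_triang (Im a) (Im b)); lra.
Qed.

Lemma Cnorm_mul (a b : Cx) : Cnorm (Cmul a b) <= Cnorm a * Cnorm b.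
Proof.
  unfold Cnorm; simpl.
  pose proof (Rabs_triang (Re a * Re b) (- (Im a * Im b))) as H1.
  pose proof (Rabs_triang (Re a * Im b) (Im a * Re b)) as H2.
  rewrite Rabs_Ropp, !Rabs_mult in H1. rewrite !Rabs_mult in H2.
  replace (Re a * Re b - Im a * Im b) with (Re a * Re b + - (Im a * Im b)) by ring.
  pose proof (Rabs_pos (Re a)); pose proof (Rabs_pos (Re b));
  pose proof (Rabs_pos (Im a)); pose proof (Rabs_pos (Im b)). nra.
Qed.

Lemma Cnorm_RtoC (x : R) : Cnorm (RtoC x) = Rabs x.
Proof. unfold Cnorm; simpl. rewrite Rabs_R0; ring. Qed.

Lemma Rabs_Re_le_Cnorm (z : Cx) : Rabs (Re z) <= Cnorm z.
Proof. unfold Cnorm; pose proof (Rabs_pos (Im z)); lra. Qed.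

Lemma Rabs_Im_le_Cnorm (z : Cx) : Rabs (Im z) <= Cnorm z.
Proof. unfold Cnorm; pose proof (Rabs_pos (Re z)); lra. Qed.

Lemma Csum_ext (f g : nat -> Cx) (K : nat) :
  (forall k, (k < K)%nat -> f k = g k) -> Csum f K = Csum g K.
Proof.
  induction K; intros H; simpl; auto.
  rewrite IHK by (intros; apply H; lia). rewrite H by lia. reflexivity.
Qed.

Lemma Csum_eq0 (f : nat -> Cx) (K : nat) : (forall k, (k < K)%nat -> f k = C0) -> Csum f K = C0.
Proof.
  induction K; intros H; simpl; auto.
  rewrite IHK by (intros; apply H; lia). rewrite H by lia. ring.
Qed.

Lemma Csum_add (f g : nat -> Cx) (K : nat) :
  Csum (fun k => Cadd (f k) (g k)) K = Cadd (Csum f K) (Csum g K).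
Proof. induction K; simpl; [apply Cx_ext; simpl; ring|]. rewrite IHK; ring. Qed.

Lemma Csum_opp (f : nat -> Cx) (K : nat) : Csum (fun k => Copp (f k)) K = Copp (Csum f K).
Proof. induction K; simpl; [apply Cx_ext; simpl; ring|]. rewrite IHK; ring. Qed.

Lemma Csum_mul_l (a : Cx) (f : nat -> Cx) (K : nat) :
  Csum (fun k => Cmul a (f k)) K = Cmul a (Csum f K).
Proof. induction K; simpl; [apply Cx_ext; simpl; ring|]. rewrite IHK; ring. Qed.

Lemma Csum_mul_r (a : Cx) (f : nat -> Cx) (K : nat) :
  Csum (fun k => Cmul (f k) a) K = Cmul (Csum f K) a.
Proof. induction K; simpl; [apply Cx_ext; simpl; ring|]. rewrite IHK; ring. Qed.

Lemma Csum_swap (f : nat -> nat -> Cx) (I J : nat) :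
  Csum (fun i => Csum (fun j => f i j) J) I = Csum (fun j => Csum (fun i => f i j) I) J.
Proof.
  induction I; simpl.
  - symmetry; apply Csum_eq0; auto.
  - rewrite IHI, <- Csum_add. reflexivity.
Qed.

Lemma Csum_add_range (f : nat -> Cx) (a b : nat) :
  Csum f (a + b) = Cadd (Csum f a) (Csum (fun j => f (a + j)%nat) b).
Proof.
  induction b; simpl.
  - rewrite Nat.add_0_r. apply Cx_ext; simpl; ring.
  - rewrite Nat.add_succ_r; simpl. rewrite IHb. ring.
Qed.

Lemma Csum_trunc (f : nat -> Cx) (a b : nat) : (a <= b)%nat ->
  (forall k, (a <= k < b)%nat -> f k = C0) -> Csum f b = Csum f a.
Proof.
  intros Hab H. replace b with (a + (b - a))%nat by lia.
  rewrite Csum_add_range, (Csum_eq0 (fun j => f (a + j)%nat)); [ring|].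
  intros; apply H; lia.
Qed.

Lemma Csum_blocks (f : nat -> Cx) (m n : nat) :
  Csum f (m * n) = Csum (fun s => Csum (fun r => f (s * n + r)%nat) n) m.
Proof.
  induction m; simpl; auto.
  replace (n + m * n)%nat with (m * n + n)%nat by lia.
  rewrite Csum_add_range, IHm. reflexivity.
Qed.

Lemma Csum_succ (f : nat -> Cx) (K : nat) : Csum f (S K) = Cadd (Csum f K) (f K).
Proof. reflexivity. Qed.

Lemma Csum_triangle (f : nat -> nat -> Cx) (D : nat) :
  Csum (fun l => Csum (fun s => f l s) (S l)) D =
  Csum (fun s => Csum (fun j => f (s + j)%nat s) (D - s)) D.
Proof.
  induction D; [reflexivity|].
  rewrite Csum_succ, IHD, (Csum_succ (fun s => Csum _ (S D - s))), Csum_succ.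
  replace (S D - D)%nat with 1%nat by lia.
  rewrite (Csum_ext (fun s => Csum (fun j => f (s + j)%nat s) (S D - s))
             (fun s => Cadd (Csum (fun j => f (s + j)%nat s) (D - s)) (f D s))).
  - rewrite Csum_add. simpl (Csum _ 1). rewrite Nat.add_0_r.
    change (Csum (fun s => f D s) D) with (Csum (f D) D). ring.
  - intros k Hk. replace (S D - k)%nat with (S (D - k)) by lia.
    rewrite Csum_succ. do 2 f_equal. lia.
Qed.

(** Cauchy-product reindexing [l = s + j]. *)
Lemma Csum_cauchy (g : nat -> nat -> Cx) (S0 J D : nat) : (0 < J)%nat -> (S0 + J <= S D)%nat ->
  (forall s j, (S0 <= s)%nat -> g s j = C0) ->
  (forall s j, (J <= j)%nat -> g s j = C0) ->
  Csum (fun l => Csum (fun s => g s (l - s)%nat) (S l)) D =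
  Csum (fun s => Csum (fun j => g s j) J) S0.
Proof.
  intros HJ HD Hs Hj. rewrite Csum_triangle.
  rewrite (Csum_trunc _ S0 D); [|lia|].
  - apply Csum_ext; intros s Hs0.
    rewrite (Csum_trunc _ J (D - s)); [|lia|].
    + apply Csum_ext; intros j _. f_equal. lia.
    + intros j Hj0. apply Hj. lia.
  - intros s Hs0. apply Csum_eq0; intros j _. apply Hs; lia.
Qed.

Lemma pow_le_pow_le1 (x : R) (p q : nat) : 0 <= x <= 1 -> (p <= q)%nat -> x ^ q <= x ^ p.
Proof.
  intros Hx Hpq. replace q with (p + (q - p))%nat by lia. rewrite pow_add.
  pose proof (pow_incr x 1 (q - p) Hx). rewrite pow1 in H.
  pose proof (pow_le x p ltac:(lra)). nra.
Qed.

(** [K] terms, like [Csum]; Stdlib's [sum_f_R0 f n] has [n + 1]. *)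
Fixpoint Rsum (f : nat -> R) (K : nat) : R :=
  match K with O => 0 | S K => Rsum f K + f K end.

Lemma Re_Csum (f : nat -> Cx) (K : nat) : Re (Csum f K) = Rsum (fun k => Re (f k)) K.
Proof. induction K; simpl; auto. rewrite IHK; auto. Qed.

Lemma Im_Csum (f : nat -> Cx) (K : nat) : Im (Csum f K) = Rsum (fun k => Im (f k)) K.
Proof. induction K; simpl; auto. rewrite IHK; auto. Qed.

Lemma Rsum_ext (f g : nat -> R) (K : nat) :
  (forall k, (k < K)%nat -> f k = g k) -> Rsum f K = Rsum g K.
Proof.
  induction K; intros H; simpl; auto.
  rewrite IHK by (intros; apply H; lia). rewrite H by lia. reflexivity.
Qed.

Lemma Rsum_le (f g : nat -> R) (K : nat) :
  (forall k, (k < K)%nat -> f k <= g k) -> Rsum f K <= Rsum g K.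
Proof.
  induction K; intros H; simpl; [lra|].
  pose proof (H K ltac:(lia)). pose proof (IHK ltac:(intros; apply H; lia)). lra.
Qed.

Lemma Rsum_ge0 (f : nat -> R) (K : nat) : (forall k, (k < K)%nat -> 0 <= f k) -> 0 <= Rsum f K.
Proof.
  induction K; intros H; simpl; [lra|].
  pose proof (H K ltac:(lia)). pose proof (IHK ltac:(intros; apply H; lia)). lra.
Qed.

Lemma Rsum_const (c : R) (K : nat) : Rsum (fun _ => c) K = INR K * c.
Proof. induction K; simpl Rsum; [simpl; ring|]. rewrite IHK, S_INR; ring. Qed.

Lemma Rsum_mul_l (a : R) (f : nat -> R) (K : nat) : Rsum (fun k => a * f k) K = a * Rsum f K.
Proof. induction K; simpl; [ring|]. rewrite IHK; ring. Qed.

Lemma Rsum_term_le (f : nat -> R) (K k : nat) :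
  (forall q, (q < K)%nat -> 0 <= f q) -> (k < K)%nat -> f k <= Rsum f K.
Proof.
  induction K; intros H Hk; [lia|]. simpl.
  pose proof (Rsum_ge0 f K ltac:(intros; apply H; lia)). pose proof (H K ltac:(lia)).
  destruct (Nat.eq_dec k K) as [->|]; [lra|].
  pose proof (IHK ltac:(intros; apply H; lia) ltac:(lia)). lra.
Qed.

Lemma Cnorm_Csum (f : nat -> Cx) (K : nat) : Cnorm (Csum f K) <= Rsum (fun k => Cnorm (f k)) K.
Proof.
  induction K; simpl.
  - unfold Cnorm; simpl; rewrite Rabs_R0; lra.
  - pose proof (Cnorm_add (Csum f K) (f K)). lra.
Qed.

Lemma Un_cv_const (c : R) : Un_cv (fun _ => c) c.
Proof. intros e He. exists O. intros. unfold Rdist. rewrite Rminus_diag, Rabs_R0; lra. Qed.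

Lemma Un_cv_abs_le (u : nat -> R) (l c : R) (K0 : nat) :
  Un_cv u l -> (forall K, (K0 <= K)%nat -> Rabs (u K) <= c) -> Rabs l <= c.
Proof.
  intros Hu H. apply Rnot_lt_le. intros Hlt.
  destruct (Hu (Rabs l - c) ltac:(lra)) as [K1 HK1].
  specialize (HK1 (max K0 K1) ltac:(lia)). specialize (H (max K0 K1) ltac:(lia)).
  unfold Rdist in HK1. pose proof (Rabs_triang_inv l (u (max K0 K1))).
  rewrite Rabs_minus_sym in HK1. lra.
Qed.

Lemma Ccv_ext (u v : nat -> Cx) (l : Cx) : (forall K, u K = v K) -> Ccv u l -> Ccv v l.
Proof. intros H [H1 H2]. split; eapply Un_cv_ext; eauto; intros; simpl; rewrite H; auto. Qed.

Lemma Ccv_add (u v : nat -> Cx) (a b : Cx) :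
  Ccv u a -> Ccv v b -> Ccv (fun K => Cadd (u K) (v K)) (Cadd a b).
Proof. intros [H1 H2] [H3 H4]. split; simpl; apply CV_plus; auto. Qed.

Lemma Ccv_mul_l (c : Cx) (u : nat -> Cx) (a : Cx) :
  Ccv u a -> Ccv (fun K => Cmul c (u K)) (Cmul c a).
Proof.
  intros [H1 H2]. split; simpl.
  - apply CV_minus; apply CV_mult; auto; apply Un_cv_const.
  - apply CV_plus; apply CV_mult; auto; apply Un_cv_const.
Qed.

Lemma Ccv_mul_r (c : Cx) (u : nat -> Cx) (a : Cx) :
  Ccv u a -> Ccv (fun K => Cmul (u K) c) (Cmul a c).
Proof.
  intros H. apply (Ccv_mul_l c) in H. rewrite (ltac:(ring) : Cmul a c = Cmul c a).
  eapply Ccv_ext; [|exact H]. intros; simpl; ring.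
Qed.

Lemma Ccv_opp (u : nat -> Cx) (a : Cx) : Ccv u a -> Ccv (fun K => Copp (u K)) (Copp a).
Proof.
  intros H. apply (Ccv_mul_l (Copp C1)) in H. replace (Copp a) with (Cmul (Copp C1) a) by ring.
  eapply Ccv_ext; [|exact H]. intros; simpl; ring.
Qed.

Lemma Ccv_eventually (u : nat -> Cx) (l : Cx) (K0 : nat) :
  (forall K, (K0 <= K)%nat -> u K = l) -> Ccv u l.
Proof.
  intros H. split; intros e He; exists K0; intros K HK; rewrite H by lia;
  unfold Rdist; rewrite Rminus_diag, Rabs_R0; lra.
Qed.

Lemma Ccv_Csum (u : nat -> nat -> Cx) (l : nat -> Cx) (Q : nat) :
  (forall q, (q < Q)%nat -> Ccv (fun K => u K q) (l q)) ->
  Ccv (fun K => Csum (fun q => u K q) Q) (Csum l Q).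
Proof.
  induction Q; intros H; simpl.
  - apply (Ccv_eventually _ _ O); reflexivity.
  - apply Ccv_add; [apply IHQ; intros; apply H; lia | apply H; lia].
Qed.

Lemma Ccv_Cnorm (u : nat -> Cx) (l : Cx) : Ccv u l -> Un_cv (fun K => Cnorm (u K)) (Cnorm l).
Proof. intros [H1 H2]. apply CV_plus; apply cv_cvabs; assumption. Qed.

Lemma Ccv_Cnorm_le (u : nat -> Cx) (l : Cx) (c : R) :
  Ccv u l -> (forall K, Cnorm (u K) <= c) -> Cnorm l <= c.
Proof. intros Hu H. exact (Rle_cv_lim H (Ccv_Cnorm _ _ Hu) (Un_cv_const c)). Qed.

Lemma Rsum_le_lim (b : nat -> R) (l : R) (K : nat) :
  (forall k, 0 <= b k) -> Un_cv (Rsum b) l -> Rsum b K <= l.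
Proof.
  intros Hb Hl. apply growing_ineq; auto.
  intros k. simpl. specialize (Hb k). lra.
Qed.

Lemma Rsum_diff_le (a b : nat -> R) (n k : nat) : (forall q, Rabs (a q) <= b q) ->
  Rabs (Rsum a (n + k) - Rsum a n) <= Rsum b (n + k) - Rsum b n.
Proof.
  intros H; induction k.
  - rewrite Nat.add_0_r, Rminus_diag, Rabs_R0. lra.
  - rewrite Nat.add_succ_r; simpl.
    replace (Rsum a (n + k) + a (n + k)%nat - Rsum a n)
      with ((Rsum a (n + k) - Rsum a n) + a (n + k)%nat) by ring.
    pose proof (Rabs_triang (Rsum a (n + k) - Rsum a n) (a (n + k)%nat)).
    pose proof (H (n + k)%nat). lra.
Qed.

Lemma Rseries_cv_compare (a b : nat -> R) : (forall k, Rabs (a k) <= b k) ->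
  (exists l, Un_cv (Rsum b) l) -> exists l, Un_cv (Rsum a) l.
Proof.
  intros H [l Hl].
  assert (Cb : Cauchy_crit (Rsum b)) by (apply CV_Cauchy; exists l; auto).
  assert (Ca : Cauchy_crit (Rsum a)).
  { intros e He. destruct (Cb e He) as [K0 HK0]. exists K0. intros p q Hp Hq.
    unfold Rdist in *.
    assert (Hpq : forall p q, (K0 <= p <= q)%nat -> Rabs (Rsum a q - Rsum a p) < e).
    { intros p' q' Hpq'. replace q' with (p' + (q' - p'))%nat by lia.
      eapply Rle_lt_trans; [apply (Rsum_diff_le a b p' (q' - p') H)|].
      eapply Rle_lt_trans; [apply Rle_abs|]. apply HK0; lia. }
    destruct (le_lt_dec p q).
    - rewrite Rabs_minus_sym. apply Hpq; lia.
    - apply Hpq; lia. }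
  destruct (R_complete _ Ca) as [la Hla]. exists la; auto.
Qed.

Lemma Cseries_cv_compare (a : nat -> Cx) (b : nat -> R) : (forall k, Cnorm (a k) <= b k) ->
  (exists l, Un_cv (Rsum b) l) -> exists L, Ccv (Csum a) L.
Proof.
  intros H Hb.
  destruct (Rseries_cv_compare (fun k => Re (a k)) b) as [l1 H1]; auto.
  { intros k; eapply Rle_trans; [apply Rabs_Re_le_Cnorm | apply H]. }
  destruct (Rseries_cv_compare (fun k => Im (a k)) b) as [l2 H2]; auto.
  { intros k; eapply Rle_trans; [apply Rabs_Im_le_Cnorm | apply H]. }
  exists (mkC l1 l2). split; simpl.
  - eapply Un_cv_ext; [|exact H1]. intros K. rewrite Re_Csum. reflexivity.
  - eapply Un_cv_ext; [|exact H2]. intros K. rewrite Im_Csum. reflexivity.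
Qed.

Lemma exp_series_cv (g : R) : exists l, Un_cv (Rsum (fun k => / INR (fact k) * g ^ k)) l.
Proof.
  destruct (exist_exp g) as [l Hl]. exists l.
  apply (CV_shift _ 1). intros e He. destruct (Hl e He) as [K0 HK0]. exists K0. intros K HK.
  replace (K + 1)%nat with (S K) by lia.
  replace (Rsum _ (S K)) with (sum_f_R0 (fun k => / INR (fact k) * g ^ k) K); [apply HK0; auto|].
  clear. induction K; simpl; [ring|]. rewrite IHK. reflexivity.
Qed.

Lemma mvmul_mmul (d : nat) (A B : mat) (v : vec) (i : nat) :
  mvmul d (mmul d A B) v i = mvmul d A (mvmul d B v) i.
Proof.
  unfold mvmul, mmul.
  transitivity (Csum (fun k => Csum (fun q => Cmul (Cmul (A i q) (B q k)) (v k)) d) d).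
  - apply Csum_ext; intros. rewrite <- Csum_mul_r. reflexivity.
  - rewrite Csum_swap. apply Csum_ext; intros. rewrite <- Csum_mul_l.
    apply Csum_ext; intros. ring.
Qed.

Lemma mvmul_mid (d : nat) (v : vec) (i : nat) : (i < d)%nat -> mvmul d mid v i = v i.
Proof.
  intros Hi. unfold mvmul. rewrite (Csum_trunc _ (S i) d), Csum_succ by
    (lia || (intros k Hk; unfold mid; destruct (Nat.eqb_spec i k); [lia|ring])).
  rewrite Csum_eq0; [unfold mid; rewrite Nat.eqb_refl; apply Cx_ext; simpl; ring|].
  intros k Hk. unfold mid. destruct (Nat.eqb_spec i k); [lia|ring].
Qed.

Lemma mvmul_mpow (d : nat) (M : mat) (k : nat) (v : vec) (i : nat) : (i < d)%nat ->
  mvmul d (mpow d M k) v i = Nat.iter k (mvmul d M) v i.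
Proof.
  revert v i; induction k; intros v i Hi.
  - apply mvmul_mid; auto.
  - simpl mpow. rewrite mvmul_mmul, IHk, Nat.iter_succ_r by auto. reflexivity.
Qed.

Lemma mvmul_exp_partial (d : nat) (M : mat) (K : nat) (v : vec) (i : nat) :
  mvmul d (exp_partial d M K) v i =
  Csum (fun k => Cmul (RtoC (/ INR (fact k))) (mvmul d (mpow d M k) v i)) K.
Proof.
  unfold mvmul, exp_partial.
  transitivity (Csum (fun q => Csum (fun k =>
    Cmul (Cmul (RtoC (/ INR (fact k))) (mpow d M k i q)) (v q)) K) d).
  - apply Csum_ext; intros. rewrite Csum_mul_r. reflexivity.
  - rewrite Csum_swap. apply Csum_ext; intros. rewrite <- Csum_mul_l.
    apply Csum_ext; intros. ring.
Qed.

Definition mnorm (d : nat) (M : mat) : R := Rsum (fun i => Rsum (fun j => Cnorm (M i j)) d) d.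

Lemma Cnorm_le_mnorm (d : nat) (M : mat) (i j : nat) : (i < d)%nat -> (j < d)%nat ->
  Cnorm (M i j) <= mnorm d M.
Proof.
  intros Hi Hj. unfold mnorm.
  eapply Rle_trans; [|apply (Rsum_term_le (fun i => Rsum (fun j => Cnorm (M i j)) d) d i); auto].
  - apply (Rsum_term_le (fun j => Cnorm (M i j)) d j); auto. intros; apply Cnorm_ge0.
  - intros; apply Rsum_ge0; intros; apply Cnorm_ge0.
Qed.

Lemma Cnorm_mpow_le (d : nat) (M : mat) (k i j : nat) : (i < d)%nat -> (j < d)%nat ->
  Cnorm (mpow d M k i j) <= (INR d * mnorm d M) ^ k.
Proof.
  revert i j; induction k; intros i j Hi Hj.
  - simpl. unfold mid. destruct (i =? j); unfold Cnorm; simpl; rewrite ?Rabs_R0, ?Rabs_R1; lra.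
  - simpl mpow. unfold mmul. eapply Rle_trans; [apply Cnorm_Csum|].
    eapply Rle_trans; [apply (Rsum_le _ (fun _ => (INR d * mnorm d M) ^ k * mnorm d M))|].
    + intros q Hq. eapply Rle_trans; [apply Cnorm_mul|].
      apply Rmult_le_compat; try apply Cnorm_ge0; [apply IHk | apply Cnorm_le_mnorm]; auto.
    + rewrite Rsum_const. simpl. lra.
Qed.

Lemma invfact_ge0 (k : nat) : 0 <= / INR (fact k).
Proof. apply Rlt_le, Rinv_0_lt_compat, lt_0_INR, lt_O_fact. Qed.

Lemma exp_partial_cv (d : nat) (M : mat) (i j : nat) : (i < d)%nat -> (j < d)%nat ->
  exists E, Ccv (fun K => exp_partial d M K i j) E.
Proof.
  intros Hi Hj.
  apply (Cseries_cv_compare _ (fun k => / INR (fact k) * (INR d * mnorm d M) ^ k));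
    [|apply exp_series_cv].
  intros k. eapply Rle_trans; [apply Cnorm_mul|]. rewrite Cnorm_RtoC, Rabs_right.
  - apply Rmult_le_compat_l; [apply invfact_ge0 | apply Cnorm_mpow_le; auto].
  - apply Rle_ge, invfact_ge0.
Qed.

Lemma mexp_spec (d : nat) (M : mat) : is_mexp d M (mexp d M).
Proof.
  unfold mexp. apply epsilon_spec.
  set (P i j E := (i < d)%nat -> (j < d)%nat -> Ccv (fun K => exp_partial d M K i j) E).
  exists (fun i j => epsilon (inhabits C0) (P i j)).
  intros i j Hi Hj. apply (epsilon_spec (inhabits C0) (P i j)); auto.
  destruct (exp_partial_cv d M i j Hi Hj) as [E HE]. exists E; intros _ _; exact HE.
Qed.

Lemma mexp_mvmul_cv (d : nat) (M : mat) (v : vec) (i : nat) : (i < d)%nat ->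
  Ccv (fun K => Csum (fun k => Cmul (RtoC (/ INR (fact k))) (Nat.iter k (mvmul d M) v i)) K)
      (mvmul d (mexp d M) v i).
Proof.
  intros Hi. unfold mvmul at 2.
  eapply Ccv_ext.
  2: { apply (Ccv_Csum (fun K q => Cmul (exp_partial d M K i q) (v q))).
       intros q Hq. apply Ccv_mul_r. apply mexp_spec; auto. }
  intros K. simpl. fold (mvmul d (exp_partial d M K) v i). rewrite mvmul_exp_partial.
  apply Csum_ext. intros k _. rewrite mvmul_mpow; auto.
Qed.

Definition Ablock (N : nat) (As : nat -> mat) (r s i j : nat) : Cx :=
  if andb (Nat.leb s r) (Nat.leb (r - s) N) then As (r - s)%nat i j else C0.

(** [pow_coef k l] is the coefficient of [ε^l] in [(t A(ε))^k u0] (lemma [iter_Apoly_pow_coef])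
    and also the block [l] of [(t L_m)^k ũ0] (lemma [iter_Lmat_pow_coef]). *)
Fixpoint pow_coef (n N : nat) (As : nat -> mat) (t : R) (u0 : vec) (k : nat) : nat -> nat -> Cx :=
  match k with
  | O => fun l i => if Nat.eqb l 0 then u0 i else C0
  | S k => fun l i => Csum (fun s => Csum (fun r =>
        Cmul (Cmul (RtoC t) (Ablock N As l s i r)) (pow_coef n N As t u0 k s r)) n) (S l)
  end.

Section Coefficients.

Variables (n N : nat) (As : nat -> mat) (t : R) (u0 : vec).

Lemma pow_coef_succ (k l i : nat) : pow_coef n N As t u0 (S k) l i =
  Csum (fun s => Csum (fun r =>
    Cmul (Cmul (RtoC t) (Ablock N As l s i r)) (pow_coef n N As t u0 k s r)) n) (S l).
Proof. reflexivity. Qed.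

Lemma div_mod_block (l i : nat) : (i < n)%nat -> ((l * n + i) / n = l /\ (l * n + i) mod n = i)%nat.
Proof.
  intros Hi. split.
  - symmetry. apply (Nat.div_unique _ _ _ i); lia.
  - symmetry. apply (Nat.mod_unique _ _ l); lia.
Qed.

Lemma Lmat_block (r s i j : nat) : (i < n)%nat -> (j < n)%nat ->
  Lmat n N As (r * n + i)%nat (s * n + j)%nat = Ablock N As r s i j.
Proof.
  intros Hi Hj. unfold Lmat.
  destruct (div_mod_block r i Hi) as [-> ->], (div_mod_block s j Hj) as [-> ->]. reflexivity.
Qed.

Lemma iter_Lmat_pow_coef (m k l i : nat) : (l < m)%nat -> (i < n)%nat ->
  Nat.iter k (mvmul (m * n) (mscale (RtoC t) (Lmat n N As))) (u0tilde n u0) (l * n + i)%nat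
  = pow_coef n N As t u0 k l i.
Proof.
  revert l i; induction k; intros l i Hl Hi.
  - simpl. unfold u0tilde. destruct (Nat.ltb_spec (l * n + i) n), (Nat.eqb_spec l 0);
      subst; simpl in *; auto; nia.
  - rewrite Nat.iter_succ, pow_coef_succ. unfold mvmul at 1.
    rewrite Csum_blocks, (Csum_trunc _ (S l) m); [|lia|].
    + apply Csum_ext; intros s Hs. apply Csum_ext; intros r Hr.
      unfold mscale. rewrite Lmat_block, IHk by lia. reflexivity.
    + intros s Hs. apply Csum_eq0; intros r Hr. unfold mscale. rewrite Lmat_block by lia.
      unfold Ablock. destruct (Nat.leb_spec s l); [lia|]. simpl; ring.
Qed.

Lemma pow_coef_support (k l i : nat) : (k * N < l)%nat -> pow_coef n N As t u0 k l i = C0.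
Proof.
  revert l i; induction k; intros l i H.
  - simpl. destruct l; [lia|reflexivity].
  - rewrite pow_coef_succ. apply Csum_eq0; intros s Hs. apply Csum_eq0; intros r Hr.
    unfold Ablock. destruct (Nat.leb_spec s l), (Nat.leb_spec (l - s) N); simpl;
      try rewrite IHk by lia; ring.
Qed.

Lemma Ablock_shift (s j i r : nat) :
  Ablock N As (s + j) s i r = if Nat.leb j N then As j i r else C0.
Proof.
  unfold Ablock. replace (s + j - s)%nat with j by lia.
  destruct (Nat.leb_spec s (s + j)); [reflexivity|lia].
Qed.

Lemma iter_Apoly_pow_coef (eps : Cx) (k i D : nat) : (i < n)%nat -> (k * N + 1 <= D)%nat ->
  Nat.iter k (mvmul n (mscale (RtoC t) (Apoly N As eps))) u0 i =
  Csum (fun l => Cmul (Cpow eps l) (pow_coef n N As t u0 k l i)) D.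
Proof.
  revert i D; induction k; intros i D Hi HD.
  - simpl. rewrite (Csum_trunc _ 1 D); [simpl; apply Cx_ext; simpl; ring|lia|].
    intros [|q] Hq; [lia|]. simpl; ring.
  - set (D0 := (k * N + 1)%nat).
    set (G s j := Csum (fun r => Cmul (Cmul (Cpow eps s) (Cpow eps j))
      (Cmul (Cmul (RtoC t) (Ablock N As (s + j) s i r)) (pow_coef n N As t u0 k s r))) n).
    transitivity (Csum (fun s => Csum (fun j => G s j) (S N)) D0).
    + rewrite Nat.iter_succ. unfold mvmul at 1.
      rewrite (Csum_ext _ (fun r => Csum (fun s => Csum (fun j =>
        Cmul (Cmul (Cpow eps s) (Cpow eps j))
          (Cmul (Cmul (RtoC t) (As j i r)) (pow_coef n N As t u0 k s r))) (S N)) D0)).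
      * rewrite Csum_swap. apply Csum_ext; intros s _. rewrite Csum_swap.
        apply Csum_ext; intros j Hj. apply Csum_ext; intros r _. unfold G.
        rewrite Ablock_shift. destruct (Nat.leb_spec j N); [reflexivity|lia].
      * intros r Hr. rewrite (IHk r D0) by (auto; lia). unfold mscale, Apoly.
        rewrite <- Csum_mul_l. apply Csum_ext; intros s _.
        rewrite <- Csum_mul_l, <- Csum_mul_r. apply Csum_ext; intros j _. ring.
    + symmetry. rewrite <- (Csum_cauchy G D0 (S N) D); [| lia | simpl; lia | |].
      * apply Csum_ext; intros l _. rewrite pow_coef_succ, <- Csum_mul_l.
        apply Csum_ext; intros s Hs. unfold G. rewrite <- Csum_mul_l.
        replace (s + (l - s))%nat with l by lia.
        apply Csum_ext; intros r _. rewrite <- Cpow_add. replace (s + (l - s))%nat with l by lia.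
        ring.
      * intros s j Hs. apply Csum_eq0; intros r _. rewrite pow_coef_support by lia. ring.
      * intros s j Hj. apply Csum_eq0; intros r _. rewrite Ablock_shift.
        destruct (Nat.leb_spec j N); [lia|]. ring.
Qed.

End Coefficients.

Definition Cnonneg (z : Cx) : Prop := Im z = 0 /\ 0 <= Re z.

Lemma Cnonneg_RtoC (x : R) : 0 <= x -> Cnonneg (RtoC x).
Proof. split; simpl; auto. Qed.

Lemma Cnonneg_add (a b : Cx) : Cnonneg a -> Cnonneg b -> Cnonneg (Cadd a b).
Proof. intros [Ha Ha'] [Hb Hb']; split; simpl; [rewrite Ha, Hb|]; lra. Qed.

Lemma Cnonneg_mul (a b : Cx) : Cnonneg a -> Cnonneg b -> Cnonneg (Cmul a b).
Proof. intros [Ha Ha'] [Hb Hb']; split; simpl; rewrite Ha, Hb; [ring|nra]. Qed.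

Lemma Cnonneg_Csum (f : nat -> Cx) (K : nat) :
  (forall k, (k < K)%nat -> Cnonneg (f k)) -> Cnonneg (Csum f K).
Proof.
  induction K; intros H; simpl; [apply (Cnonneg_RtoC 0); lra|].
  apply Cnonneg_add; [apply IHK; intros; apply H|apply H]; lia.
Qed.

Lemma RtoC_mul (a b : R) : RtoC (a * b) = Cmul (RtoC a) (RtoC b).
Proof. apply Cx_ext; simpl; ring. Qed.

Definition mat_abs (As : nat -> mat) : nat -> mat := fun j i r => RtoC (Cnorm (As j i r)).
Definition vec_abs (u : vec) : vec := fun r => RtoC (Cnorm (u r)).

Section Majorant.

Variables (n N : nat) (As : nat -> mat) (t : R) (u0 : vec).

Let coef := pow_coef n N As t u0.
(** The coefficients of the same expansion for the entrywise moduli [|A_j|], [|t|], [|u0|]. *)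
Let major := pow_coef n N (mat_abs As) (Rabs t) (vec_abs u0).

Lemma Ablock_abs (l s i r : nat) :
  Ablock N (mat_abs As) l s i r = RtoC (Cnorm (Ablock N As l s i r)).
Proof.
  unfold Ablock. destruct (_ && _)%bool; [reflexivity|].
  unfold Cnorm; simpl. rewrite Rabs_R0, Rplus_0_l. reflexivity.
Qed.

Lemma major_nonneg (k l i : nat) : Cnonneg (major k l i).
Proof.
  unfold major. revert l i; induction k; intros l i.
  - simpl. destruct (l =? 0); [apply Cnonneg_RtoC, Cnorm_ge0 | apply (Cnonneg_RtoC 0); lra].
  - rewrite pow_coef_succ. apply Cnonneg_Csum; intros s _. apply Cnonneg_Csum; intros r _.
    rewrite Ablock_abs. repeat apply Cnonneg_mul; auto;
    apply Cnonneg_RtoC; auto using Rabs_pos, Cnorm_ge0.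
Qed.

Lemma Cnorm_coef_le_major (k l i : nat) : Cnorm (coef k l i) <= Re (major k l i).
Proof.
  revert l i; induction k; intros l i.
  - unfold coef, major; simpl. destruct (l =? 0); simpl; [lra|].
    unfold Cnorm; simpl; rewrite Rabs_R0; lra.
  - unfold coef, major. rewrite !pow_coef_succ, Re_Csum.
    eapply Rle_trans; [apply Cnorm_Csum|]. apply Rsum_le; intros s _.
    rewrite Re_Csum. eapply Rle_trans; [apply Cnorm_Csum|]. apply Rsum_le; intros r _.
    rewrite Ablock_abs, <- RtoC_mul, Re_RtoC_mul.
    eapply Rle_trans; [apply Cnorm_mul|]. apply Rmult_le_compat; try apply Cnorm_ge0.
    + eapply Rle_trans; [apply Cnorm_mul|]. rewrite Cnorm_RtoC. lra.
    + apply IHk.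
Qed.

Let major_iter (k i : nat) : Cx :=
  Nat.iter k (mvmul n (mscale (RtoC (Rabs t)) (Apoly N (mat_abs As) (RtoC 1)))) (vec_abs u0) i.

Lemma major_iter_split (m J k i : nat) : (i < n)%nat -> (k * N + 1 <= m + J)%nat ->
  Re (major_iter k i) = Rsum (fun l => Re (major k l i)) m + Rsum (fun j => Re (major k (m + j) i)) J.
Proof.
  intros Hi HJ. unfold major_iter. rewrite (iter_Apoly_pow_coef _ _ _ _ _ _ k i (m + J)) by auto.
  rewrite Csum_add_range. simpl Re at 1. rewrite !Re_Csum.
  f_equal; apply Rsum_ext; intros l _; rewrite Cpow_RtoC, pow1, Re_RtoC_mul; unfold major; ring.
Qed.

Lemma major_iter_nonneg (k i : nat) : (i < n)%nat -> 0 <= Re (major_iter k i).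
Proof.
  intros Hi. rewrite (major_iter_split 0 (k * N + 1) k i) by (auto; lia).
  apply Rplus_le_le_0_compat; apply Rsum_ge0; intros; apply major_nonneg.
Qed.

Let tail (x : R) (m k i : nat) : Cx :=
  Csum (fun j => Cmul (Cpow (RtoC x) (m + j)) (coef k (m + j)%nat i)) (k * N + 1).

Lemma tail_Cnorm_le (x : R) (m k i : nat) : 0 <= x <= 1 -> (i < n)%nat ->
  Cnorm (tail x m k i) <= x ^ m * Re (major_iter k i).
Proof.
  intros Hx Hi. unfold tail. rewrite (major_iter_split m (k * N + 1) k i) by (auto; lia).
  assert (Hm : 0 <= Rsum (fun l => Re (major k l i)) m)
    by (apply Rsum_ge0; intros; apply major_nonneg).
  pose proof (pow_le x m ltac:(lra)).
  eapply Rle_trans; [apply Cnorm_Csum|].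
  eapply Rle_trans with (x ^ m * Rsum (fun j => Re (major k (m + j) i)) (k * N + 1)); [|nra].
  rewrite <- Rsum_mul_l. apply Rsum_le; intros j _.
  eapply Rle_trans; [apply Cnorm_mul|]. rewrite Cpow_RtoC, Cnorm_RtoC, Rabs_right
    by (apply Rle_ge, pow_le; lra).
  pose proof (Cnorm_ge0 (coef k (m + j)%nat i)).
  apply Rmult_le_compat; auto using pow_le_pow_le1, Cnorm_coef_le_major with arith.
  apply pow_le; lra.
Qed.

Lemma exp_partial_sum_split (x : R) (m i K : nat) : (i < n)%nat ->
  Csum (fun k => Cmul (RtoC (/ INR (fact k)))
    (Nat.iter k (mvmul n (mscale (RtoC t) (Apoly N As (RtoC x)))) u0 i)) K
  = Cadd (Csum (fun l => Cmul (Cpow (RtoC x) l)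
           (Csum (fun k => Cmul (RtoC (/ INR (fact k))) (coef k l i)) K)) m)
         (Csum (fun k => Cmul (RtoC (/ INR (fact k))) (tail x m k i)) K).
Proof.
  intros Hi.
  rewrite (Csum_ext _ (fun k => Cadd
    (Csum (fun l => Cmul (Cpow (RtoC x) l) (Cmul (RtoC (/ INR (fact k))) (coef k l i))) m)
    (Cmul (RtoC (/ INR (fact k))) (tail x m k i)))).
  - rewrite Csum_add, Csum_swap. f_equal. apply Csum_ext; intros l _. apply Csum_mul_l.
  - intros k _. unfold tail, coef.
    rewrite (iter_Apoly_pow_coef _ _ _ _ _ _ k i (m + (k * N + 1))), Csum_add_range by (auto; lia).
    rewrite (Csum_ext (fun l => Cmul (Cpow (RtoC x) l)
      (Cmul (RtoC (/ INR (fact k))) (pow_coef n N As t u0 k l i)))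
      (fun l => Cmul (RtoC (/ INR (fact k)))
      (Cmul (Cpow (RtoC x) l) (pow_coef n N As t u0 k l i)))) by (intros; ring).
    rewrite Csum_mul_l. ring.
Qed.

Lemma exp_Apoly_remainder (m i : nat) (g : nat -> Cx) : (i < n)%nat ->
  (forall l, (l < m)%nat ->
     Ccv (fun K => Csum (fun k => Cmul (RtoC (/ INR (fact k))) (coef k l i)) K) (g l)) ->
  exists C, forall x, 0 <= x <= 1 ->
    Cnorm (Csub (mvmul n (mexp n (mscale (RtoC t) (Apoly N As (RtoC x)))) u0 i)
                (Csum (fun l => Cmul (Cpow (RtoC x) l) (g l)) m)) <= x ^ m * C.
Proof.
  intros Hi Hg.
  set (B := mscale (RtoC (Rabs t)) (Apoly N (mat_abs As) (RtoC 1))).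
  exists (Re (mvmul n (mexp n B) (vec_abs u0) i)). intros x Hx.
  assert (Hmajor : Un_cv (Rsum (fun k => / INR (fact k) * Re (major_iter k i)))
                         (Re (mvmul n (mexp n B) (vec_abs u0) i))).
  { eapply Un_cv_ext; [|apply (mexp_mvmul_cv n B (vec_abs u0) i Hi)].
    intros K. cbv beta. rewrite Re_Csum. apply Rsum_ext; intros k _. apply Re_RtoC_mul. }
  assert (Hpoly : Ccv (fun K => Csum (fun l => Cmul (Cpow (RtoC x) l)
       (Csum (fun k => Cmul (RtoC (/ INR (fact k))) (coef k l i)) K)) m)
       (Csum (fun l => Cmul (Cpow (RtoC x) l) (g l)) m)).
  { apply (Ccv_Csum (fun K l => Cmul (Cpow (RtoC x) l) _)). intros l Hl.
    apply Ccv_mul_l, Hg, Hl. }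
  assert (Hcv : Ccv (fun K => Csum (fun k => Cmul (RtoC (/ INR (fact k))) (tail x m k i)) K)
    (Csub (mvmul n (mexp n (mscale (RtoC t) (Apoly N As (RtoC x)))) u0 i)
          (Csum (fun l => Cmul (Cpow (RtoC x) l) (g l)) m))).
  { eapply Ccv_ext; [|exact (Ccv_add _ _ _ _ (mexp_mvmul_cv _ _ u0 i Hi) (Ccv_opp _ _ Hpoly))].
    intros K. cbv beta. rewrite (exp_partial_sum_split x m) by auto. ring. }
  apply (Ccv_Cnorm_le _ _ _ Hcv).
  intros K. eapply Rle_trans; [apply Cnorm_Csum|].
  eapply Rle_trans with (x ^ m * Rsum (fun k => / INR (fact k) * Re (major_iter k i)) K).
  - rewrite <- Rsum_mul_l. apply Rsum_le; intros k _.
    eapply Rle_trans; [apply Cnorm_mul|]. rewrite Cnorm_RtoC, Rabs_right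
      by (apply Rle_ge, invfact_ge0).
    pose proof (tail_Cnorm_le x m k i Hx Hi). pose proof (invfact_ge0 k). nra.
  - apply Rmult_le_compat_l; [apply pow_le; lra|]. apply Rsum_le_lim; auto.
    intros k. apply Rmult_le_pos; [apply invfact_ge0 | apply major_iter_nonneg; auto].
Qed.

End Majorant.

Lemma Rabs_le_linear_eq0 (a E : R) : (forall x, 0 < x <= 1 -> Rabs a <= E * x) -> a = 0.
Proof.
  intros H. destruct (Req_dec a 0) as [|Ha]; auto. exfalso.
  assert (Hpos : 0 < Rabs a) by (apply Rabs_pos_lt; auto).
  set (x := Rmin 1 (Rabs a / (2 * (Rabs E + 1)))).
  assert (Hx : 0 < x <= 1).
  { split; [apply Rmin_glb_lt; [lra|] | apply Rmin_l].
    apply Rdiv_lt_0_compat; pose proof (Rabs_pos E); lra. }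
  assert (Hx' : x * (2 * (Rabs E + 1)) <= Rabs a).
  { pose proof (Rmin_r 1 (Rabs a / (2 * (Rabs E + 1)))) as Hr. fold x in Hr.
    pose proof (Rabs_pos E). apply (Rmult_le_compat_r (2 * (Rabs E + 1))) in Hr; [|lra].
    unfold Rdiv in Hr. rewrite Rmult_assoc, Rinv_l in Hr; lra. }
  pose proof (H x Hx). pose proof (Rle_abs E). nra.
Qed.

Lemma Rseries_terms_bounded (b : nat -> R) (L : R) :
  Un_cv (Rsum b) L -> exists B, forall l, Rabs (b l) <= B.
Proof.
  intros HL. destruct (maj_by_pos (Rsum b) (exist _ L HL)) as [B [_ HB]].
  exists (2 * B). intros l.
  replace (b l) with (Rsum b (S l) - Rsum b l) by (simpl; ring).
  pose proof (Rabs_triang (Rsum b (S l)) (- Rsum b l)). rewrite Rabs_Ropp in H.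
  pose proof (HB (S l)); pose proof (HB l). unfold Rminus. lra.
Qed.

Section PowerSeriesCoefficients.

Variables (a : nat -> R) (B : R).
Hypothesis a_bound : forall l, Rabs (a l) <= B * (/ 2) ^ l.

Lemma partial_sum_first_term (x : R) (j d : nat) : 0 <= x <= 1 ->
  (forall l, (l < j)%nat -> a l = 0) ->
  Rabs (Rsum (fun l => x ^ l * a l) (S j + d) - x ^ j * a j) <= B * x ^ S j * (2 - 2 * (/ 2) ^ d).
Proof.
  intros Hx Hlow. induction d.
  - rewrite Nat.add_0_r. simpl Rsum.
    rewrite (Rsum_ext _ (fun _ => 0)), Rsum_const by (intros l Hl; rewrite Hlow by auto; ring).
    replace (INR j * 0 + x ^ j * a j - x ^ j * a j) with 0 by ring.
    rewrite Rabs_R0. simpl. lra.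
  - rewrite Nat.add_succ_r. cbn [Rsum].
    set (S0 := Rsum (fun l => x ^ l * a l) (S j + d)) in *.
    replace (S0 + x ^ (S j + d) * a (S j + d)%nat - x ^ j * a j)
      with ((S0 - x ^ j * a j) + x ^ (S j + d) * a (S j + d)%nat) by ring.
    eapply Rle_trans; [apply Rabs_triang|].
    assert (Hterm : Rabs (x ^ (S j + d) * a (S j + d)%nat) <= B * x ^ S j * (/ 2) ^ d).
    { assert (B0 : 0 <= B)
        by (pose proof (a_bound O); pose proof (Rabs_pos (a O)); simpl in *; lra).
      rewrite Rabs_mult, Rabs_right by (apply Rle_ge, pow_le; lra).
      apply Rle_trans with (x ^ S j * (B * (/ 2) ^ d)); [|right; ring].
      apply Rmult_le_compat.
      - apply pow_le; lra.
      - apply Rabs_pos.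
      - apply pow_le_pow_le1; [lra|lia].
      - eapply Rle_trans; [apply a_bound|]. apply Rmult_le_compat_l; auto.
        apply pow_le_pow_le1; [lra|lia]. }
    replace (B * x ^ S j * (2 - 2 * (/ 2) ^ S d))
      with (B * x ^ S j * (2 - 2 * (/ 2) ^ d) + B * x ^ S j * (/ 2) ^ d) by (simpl; field).
    lra.
Qed.

Lemma low_coef_step (f : R -> R) (C : R) (m j : nat) :
  (forall x, Un_cv (Rsum (fun l => x ^ l * a l)) (f x)) ->
  (forall x, 0 < x <= 1 -> Rabs (f x) <= x ^ m * C) ->
  (j < m)%nat -> (forall l, (l < j)%nat -> a l = 0) -> a j = 0.
Proof.
  intros Hf HC Hj Hlow.
  assert (B0 : 0 <= B) by (pose proof (a_bound O); pose proof (Rabs_pos (a O)); simpl in *; lra).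
  apply (Rabs_le_linear_eq0 _ (Rabs C + 2 * B)). intros x Hx.
  assert (Hrest : Rabs (f x - x ^ j * a j) <= 2 * B * x ^ S j).
  { apply (Un_cv_abs_le (fun K => Rsum (fun l => x ^ l * a l) K - x ^ j * a j) _ _ (S j)).
    - apply CV_minus; [apply Hf | apply Un_cv_const].
    - intros K HK. replace K with (S j + (K - S j))%nat by lia.
      eapply Rle_trans; [apply partial_sum_first_term; auto; lra|].
      assert (0 <= B * x ^ S j * (/ 2) ^ (K - S j)).
      { apply Rmult_le_pos; [apply Rmult_le_pos|]; auto; apply pow_le; lra. }
      lra. }
  pose proof (HC x Hx) as Hfx.
  pose proof (Rabs_triang (f x) (- (f x - x ^ j * a j))) as Htri.
  replace (f x + - (f x - x ^ j * a j)) with (x ^ j * a j) in Htri by ring.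
  rewrite Rabs_Ropp, Rabs_mult, Rabs_right in Htri by (apply Rle_ge, pow_le; lra).
  pose proof (pow_le_pow_le1 x (S j) m ltac:(lra) Hj).
  pose proof (pow_le x m ltac:(lra)). pose proof (Rle_abs C). pose proof (Rabs_pos C).
  assert (Hxj : 0 < x ^ j) by (apply pow_lt; lra).
  apply (Rmult_le_reg_l (x ^ j)); auto.
  replace (x ^ j * ((Rabs C + 2 * B) * x)) with ((Rabs C + 2 * B) * x ^ S j) by (simpl; ring).
  assert (x ^ m * C <= Rabs C * x ^ S j) by nra.
  lra.
Qed.

End PowerSeriesCoefficients.

Lemma Rseries_low_coef_eq0 (a : nat -> R) (f : R -> R) (C : R) (m : nat) :
  (forall x, Un_cv (Rsum (fun l => x ^ l * a l)) (f x)) ->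
  (forall x, 0 < x <= 1 -> Rabs (f x) <= x ^ m * C) ->
  forall j, (j < m)%nat -> a j = 0.
Proof.
  intros Hf HC.
  destruct (Rseries_terms_bounded _ _ (Hf 2)) as [B HB].
  assert (Ha : forall l, Rabs (a l) <= B * (/ 2) ^ l).
  { intros l. specialize (HB l). rewrite Rabs_mult, Rabs_right in HB
      by (apply Rle_ge, pow_le; lra).
    assert (0 < 2 ^ l) by (apply pow_lt; lra).
    rewrite pow_inv. apply (Rmult_le_reg_l (2 ^ l)); auto.
    replace (2 ^ l * (B * / 2 ^ l)) with B by (field; lra). lra. }
  intros j; induction j as [j IH] using lt_wf_ind; intros Hj.
  apply (low_coef_step a B Ha f C m j Hf HC Hj). intros l Hl. apply IH; lia.
Qed.

Lemma Cseries_low_coef_eq0 (d : nat -> Cx) (F : R -> Cx) (C : R) (m : nat) :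
  (forall x, Ccv (fun K => Csum (fun l => Cmul (Cpow (RtoC x) l) (d l)) K) (F x)) ->
  (forall x, 0 < x <= 1 -> Cnorm (F x) <= x ^ m * C) ->
  forall j, (j < m)%nat -> d j = C0.
Proof.
  intros HF HC j Hj. apply Cx_ext; simpl.
  - apply (Rseries_low_coef_eq0 (fun l => Re (d l)) (fun x => Re (F x)) C m); auto.
    + intros x. eapply Un_cv_ext; [|apply (HF x)]. intros K. cbv beta.
      rewrite Re_Csum. apply Rsum_ext; intros l _. rewrite Cpow_RtoC. apply Re_RtoC_mul.
    + intros x Hx. eapply Rle_trans; [apply Rabs_Re_le_Cnorm | auto].
  - apply (Rseries_low_coef_eq0 (fun l => Im (d l)) (fun x => Im (F x)) C m); auto.
    + intros x. eapply Un_cv_ext; [|apply (HF x)]. intros K. cbv beta.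
      rewrite Im_Csum. apply Rsum_ext; intros l _. rewrite Cpow_RtoC. apply Im_RtoC_mul.
    + intros x Hx. eapply Rle_trans; [apply Rabs_Im_le_Cnorm | auto].
Qed.

Lemma exp_Lmat_block_cv (n N : nat) (As : nat -> mat) (t : R) (u0 : vec) (m l i : nat) :
  (l < m)%nat -> (i < n)%nat ->
  Ccv (fun K => Csum (fun k => Cmul (RtoC (/ INR (fact k))) (pow_coef n N As t u0 k l i)) K)
      (mvmul (m * n) (mexp (m * n) (mscale (RtoC t) (Lmat n N As))) (u0tilde n u0) (l * n + i)%nat).
Proof.
  intros Hl Hi. eapply Ccv_ext; [|apply mexp_mvmul_cv; nia].
  intros K. apply Csum_ext; intros k _. rewrite iter_Lmat_pow_coef; auto.
Qed.

Lemma Cseries_sub_poly_cv (z : Cx) (c g : nat -> Cx) (m : nat) (F : Cx) :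
  Ccv (fun K => Csum (fun l => Cmul (Cpow z l) (c l)) K) F ->
  Ccv (fun K => Csum (fun l => Cmul (Cpow z l) (Csub (c l) (if Nat.ltb l m then g l else C0))) K)
      (Csub F (Csum (fun l => Cmul (Cpow z l) (g l)) m)).
Proof.
  intros Hc.
  assert (Hg : Ccv (fun K => Csum (fun l => Cmul (Cpow z l) (if Nat.ltb l m then g l else C0)) K)
                   (Csum (fun l => Cmul (Cpow z l) (g l)) m)).
  { apply (Ccv_eventually _ _ m). intros K HK. rewrite (Csum_trunc _ m K HK).
    - apply Csum_ext; intros l Hl. destruct (Nat.ltb_spec l m); [reflexivity|lia].
    - intros l Hl. destruct (Nat.ltb_spec l m); [lia|ring]. }
  eapply Ccv_ext; [|exact (Ccv_add _ _ _ _ Hc (Ccv_opp _ _ Hg))].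
  intros K. cbv beta. rewrite <- Csum_opp, <- Csum_add. apply Csum_ext; intros l _.
  unfold Csub. ring.
Qed.

Theorem mainTheorem1 :
  forall (n N : nat) (As : nat -> mat) (u0 : vec) (c : R -> nat -> vec),
    (1 <= n)%nat -> (1 <= N)%nat ->
    (forall (t : R) (eps : Cx) (i : nat), (i < n)%nat ->
       Ccv (fun K => Csum (fun l => Cmul (Cpow eps l) (c t l i)) K)
           (mvmul n (mexp n (mscale (RtoC t) (Apoly N As eps))) u0 i)) ->
    forall (m : nat) (t : R), (1 <= m)%nat ->
      forall p : nat, (p < m * n)%nat ->
        stackv n (c t) p =
        mvmul (m * n) (mexp (m * n) (mscale (RtoC t) (Lmat n N As)))
              (u0tilde n u0) p.
Proof.
  intros n N As u0 c Hn _ Hc m t _ p Hp.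
  set (l := (p / n)%nat). set (i := (p mod n)%nat).
  assert (Hi : (i < n)%nat) by (apply Nat.mod_upper_bound; lia).
  assert (Hl : (l < m)%nat) by (apply Nat.Div0.div_lt_upper_bound; lia).
  assert (Hpli : (l * n + i)%nat = p) by (pose proof (Nat.div_mod_eq p n); lia).
  set (g l := mvmul (m * n) (mexp (m * n) (mscale (RtoC t) (Lmat n N As))) (u0tilde n u0)
                (l * n + i)%nat).
  destruct (exp_Apoly_remainder n N As t u0 m i g Hi) as [C HC].
  { intros l' Hl'. apply exp_Lmat_block_cv; auto. }
  pose proof (Cseries_low_coef_eq0 _ _ C m
    (fun x => Cseries_sub_poly_cv _ _ g m _ (Hc t (RtoC x) i Hi))
    (fun x Hx => HC x ltac:(lra)) l Hl) as Hcoef.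
  cbv beta in Hcoef. destruct (Nat.ltb_spec l m); [|lia].
  unfold stackv. fold l i. rewrite (Csub_eq0 _ _ Hcoef). unfold g. rewrite Hpli. reflexivity.
Qed.
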